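(* Let $\gamma=(\gamma_1,\dots,\gamma_b)$ be a parallel map on $V=V_1\oplus\cdots\oplus V_b$, $V_i\cong(\mathbb F_2)^m$, with $0\gamma=0$. Suppose every $\gamma_i$ is differentially $2^r$-uniform with $r<m-1$ and strongly $r$-anti-invariant. If $\gamma$ maps $\mathcal{LA}_U(W_1|W_2)$ onto a non-trivial partition $\mathcal L(W)$, then $W_1$, $W_2$, $W$ are walls and $W_1=W_2=W$; in particular $\mathcal{LA}_U(W_1|W_2)$ is linear.
   Context: Let $m,b>1$, $n=mb$, $V=(\mathbb F_2)^n=V_1\oplus\cdots\oplus V_b$, $V_i\cong(\mathbb F_2)^m$. Permutations act on the right. A parallel map is $\gamma\in\mathrm{Sym}(V)$ with $(v_1\oplus\cdots\oplus v_b)\gamma=v_1\gamma_1\oplus\cdots\oplus v_b\gamma_b$, $\gamma_i\in\mathrm{Sym}(V_i)$. A wall is $\bigoplus_{i\in I}V_i$ with $\emptyset\ne I\subsetneq\{1,\dots,b\}$. $f:(\mathbb F_2)^m\to(\mathbb F_2)^m$ is differentially $\delta$-uniform if $\delta=\max_{a\ne0,b}|\{x:f(x+a)+f(x)=b\}|$; for $f(0)=0$ and $1\le r<m$, $f$ is strongly $r$-anti-invariant if for all subspaces $U',W'$ with $f(U')=W'$, either $\dim U'=\dim W'<m-r$ or $U'=W'=(\mathbb F_2)^m$. A permutation maps $\mathcal A$ onto $\mathcal B$ if it sends the blocks of $\mathcal A$ exactly onto those of $\mathcal B$; trivial partitions are the singleton partition and $\{V\}$. $\mathcal L(W)=\{W+v:v\in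 V\}$. For a subspace $U$ of dimension $n-1$ and subspaces $W_1,W_2\subseteq U$, $\mathcal{LA}_U(W_1|W_2)=\{W_1+v:v\in U\}\cup\{(W_2+\bar v)+v:v\in U\}$ for any $\bar v\in V\setminus U$. *)

From HB Require Import structures.
From mathcomp Require Import all_boot all_order all_algebra all_fingroup.
Set Implicit Arguments. Unset Strict Implicit. Unset Printing Implicit Defensive.
Import GRing.Theory.
Local Open Scope ring_scope.

Notation F2 := 'F_2.
Notation Blk m := 'rV[F2]_m.

(* V = V_1 (+) ... (+) V_b, realized as functions 'I_b -> (F_2)^m;
   this is an F_2-vector space of dimension m*b. *)
Notation Vsp m b := {ffun 'I_b -> Blk m}.

Definition parallel (m b : nat) (g : 'I_b -> {perm Blk m}) (v : Vsp m b) : Vsp m b :=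
  [ffun i => g i (v i)].

Definition diff_unif (m : nat) (f : Blk m -> Blk m) : nat :=
  \max_(a : Blk m | a != 0) \max_(c : Blk m) #|[set x | (f (x + a) + f x == c)%R]|.

Definition diff_uniform (m : nat) (f : Blk m -> Blk m) (delta : nat) : Prop :=
  diff_unif f = delta.

Definition strongly_anti_invariant (m r : nat) (f : Blk m -> Blk m) : Prop :=
  f 0 = 0 /\
  forall U' W' : {vspace Blk m},
    [set f x | x in [set y | y \in U']] = [set y | y \in W'] ->
    (\dim U' = \dim W' /\ (\dim U' < m - r)%N) \/ (U' = fullv /\ W' = fullv).

Definition vcoset (m b : nat) (W : {vspace Vsp m b}) (v : Vsp m b) : {set Vsp m b} :=
  [set w + v | w : Vsp m b in [set y | y \in W]].

Definition Lpart (m b : nat) (W : {vspace Vsp m b}) : {set {set Vsp m b}} :=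
  [set vcoset W v | v in [set: Vsp m b]].

(* LA_U(W1|W2) = {W1 + v : v in U} u {(W2 + vbar) + v : v in U}, vbar not in U *)
Definition LApart (m b : nat) (U W1 W2 : {vspace Vsp m b}) (vbar : Vsp m b)
  : {set {set Vsp m b}} :=
  [set vcoset W1 v | v in [set y | y \in U]] :|:
  [set vcoset W2 (vbar + v) | v in [set y | y \in U]].

Definition singleton_part (T : finType) : {set {set T}} := [set [set v] | v in [set: T]].
Definition full_part (T : finType) : {set {set T}} := [set [set: T]].

Definition maps_onto (T : finType) (f : T -> T) (A B : {set {set T}}) : Prop :=
  [set f @: X | X : {set T} in A] = B.

(* walls: (+)_{i in I} V_i with I nonempty and proper *)
Definition wall (m b : nat) (W : {vspace Vsp m b}) : Prop :=
  exists I : {set 'I_b}, [/\ I != set0, I != setT &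
    forall v : Vsp m b, v \in W <-> (forall i, i \notin I -> v i = 0)].

(* Write F for the parallel map, e_i for the embedding of the i-th block and
   T_i = {t | e_i t \in U}; as U is a hyperplane, #|T_i| >= 2^(m-1).  Each
   block W1 + x (x in U) of LA_U(W1|W2) is sent onto a coset of W, so
   F (w + e_i t) - F (e_i t) lies in W for w in W1 and t in T_i, and F maps
   W1 onto W because F 0 = 0.  Look at the i-th section W^i = {y | e_i y \in W},
   which gamma_i maps W1^i onto.  If W^i <> 0, pick a <> 0 in W1^i: the
   derivative of gamma_i in direction a sends T_i into W^i \ {0}, so 2^r-uniformity
   gives dim W^i >= m - r and strong anti-invariance forces W^i to be everything.
   If W^i = 0 but w_i <> 0 for some w in W1, the derivative of gamma_i in
   direction w_i is constant on T_i, contradicting 2^r < 2^(m-1).  Hence W1, W2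
   and W are supported on the set I of blocks with full section, W is the wall
   of I, and counting gives W1 = W2 = W; non-triviality of L(W) makes I a
   proper nonempty set. *)

From HB Require Import structures.
From mathcomp Require Import all_boot all_order all_algebra all_fingroup all_field.
From mathcomp Require Import zify.
Import GRing.Theory.
Local Open Scope ring_scope.
Set Implicit Arguments. Unset Strict Implicit. Unset Printing Implicit Defensive.

Lemma F2_0or1 (k : F2) : k = 0 \/ k = 1.
Proof. by case: k => -[|[|//]] ?; [left | right]; apply: val_inj. Qed.

Lemma addvv_F2 (V : lmodType F2) (x : V) : x + x = 0.
Proof. by rewrite -[x]scale1r -scalerDl (_ : 1 + 1 = 0) ?scale0r //; apply: val_inj. Qed.

Lemma opprv_F2 (V : lmodType F2) (x : V) : - x = x.
Proof. by apply/esym/eqP; rewrite -addr_eq0 addvv_F2. Qed.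

Lemma hyperplane_addv (vT : vectType F2) (U : {vspace vT}) x y :
  \dim U = (\dim {:vT}).-1 -> x \notin U -> y \notin U -> x + y \in U.
Proof.
move=> dimU xU yU.
have Ux_full : (U + <[x]>)%VS = fullv.
  have U_lt : (\dim U < \dim (U + <[x]>))%N.
    rewrite ltn_neqAle dimvS ?addvSl // andbT (dimv_leqif_eq (addvSl U <[x]>)).2.
    by apply: contraNneq xU => ->; rewrite -{1}[x]add0r memv_add ?mem0v ?memv_line.
  apply/eqP; rewrite eqEdim subvf /=; have := dimvS (subvf (U + <[x]>)); lia.
have /memv_addP [u uU [_ /vlineP [k ->] yE]] : y \in (U + <[x]>)%VS.
  by rewrite Ux_full memvf.
move: yU; rewrite yE; case: (F2_0or1 k) => ->; first by rewrite scale0r addr0 uU.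
by rewrite scale1r addrCA addvv_F2 addr0.
Qed.

Lemma card_Blk m : #|{: Blk m}| = (2 ^ m)%N.
Proof. by rewrite card_mx card_Fp // mul1n. Qed.

Lemma dim_Vsp m b : \dim {:Vsp m b} = (m * b)%N.
Proof. by rewrite dimvf /dim /= card_ord dim_matrix mul1r mulnC. Qed.

Lemma card_preim_hyperplane m (vT : vectType F2) (f : {additive Blk m -> vT})
    (U : {vspace vT}) :
  \dim U = (\dim {:vT}).-1 -> (0 < m)%N ->
  (2 ^ m.-1 <= #|[set t | f t \in U]|)%N.
Proof.
move=> dimU m_gt0; set T := [set t | f t \in U].
have leTC : (#|~: T| <= #|T|)%N.
  have [-> | [t0 Tt0]] := set_0Vmem (~: T); first by rewrite cards0.
  rewrite -(card_imset _ (addIr t0)).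
  apply/subset_leq_card/subsetP => _ /imsetP [t Tt ->].
  by move: Tt Tt0; rewrite !inE raddfD; apply: hyperplane_addv.
have pow_m : (2 ^ m = 2 * 2 ^ m.-1)%N by rewrite -expnS prednK.
have := cardsC T; rewrite card_Blk; lia.
Qed.

Lemma leq_card_diff_level m (f : Blk m -> Blk m) (a c : Blk m) : a != 0 ->
  (#|[set x | (f (x + a) + f x == c)%R]| <= diff_unif f)%N.
Proof. by move=> a_neq0; rewrite /diff_unif (bigD1 a) //= (bigD1 c) //= !leq_max leqnn. Qed.

Lemma leq_card_diff_into m (f : Blk m -> Blk m) (a : Blk m) (T L : {set Blk m}) :
  a != 0 -> (forall t, t \in T -> f (t + a) + f t \in L) ->
  (#|T| <= #|L| * diff_unif f)%N.
Proof.
move=> a_neq0 TL.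
rewrite -sum1_card (partition_big (fun t => f (t + a) + f t) (mem L)) //=.
rewrite -sum_nat_const; apply: leq_sum => c _; rewrite sum1dep_card.
apply: leq_trans (leq_card_diff_level f c a_neq0).
by apply/subset_leq_card/subsetP => t; rewrite !inE => /andP [].
Qed.

Lemma diff_image_full m r (f : {perm Blk m}) (A B : {vspace Blk m}) (T : {set Blk m}) :
  diff_unif f = (2 ^ r)%N -> strongly_anti_invariant r f ->
  (2 ^ m.-1 <= #|T|)%N ->
  [set f x | x in [set y in A]] = [set y in B] ->
  (forall t a, t \in T -> a \in A -> f (t + a) + f t \in B) ->
  B != 0%VS -> B = fullv.
Proof.
move=> diff_f [f0 anti_f] T_large fAB diff_AB B_neq0.
have /imsetP [a] : vpick B \in [set f x | x in [set y in A]].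
  by rewrite fAB inE memv_pick.
rewrite inE => Aa pickB.
have a_neq0 : a != 0 by apply: contraNneq B_neq0 => a0; rewrite -vpick0 pickB a0 f0.
pose B0 := [set y in B | y != 0].
have diff_into t : t \in T -> f (t + a) + f t \in B0.
  move=> Tt; rewrite inE diff_AB //= addr_eq0 opprv_F2.
  by apply: contra a_neq0 => /eqP /perm_inj /eqP; rewrite -{2}[t]addr0 (inj_eq (addrI t)).
have B0_small : (#|B0| < 2 ^ \dim B)%N.
  have -> : (2 ^ \dim B)%N = #|[set y in B]| by rewrite cardsE card_vspace card_Fp.
  apply/proper_card/properP; split.
    by apply/subsetP => y; rewrite !inE => /andP [].
  by exists 0; rewrite ?inE ?mem0v ?eqxx.
have : (2 ^ m.-1 < 2 ^ (\dim B + r))%N.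
  rewrite expnD -diff_f; apply: leq_ltn_trans T_large _.
  apply: leq_ltn_trans (leq_card_diff_into a_neq0 diff_into) _.
  by rewrite ltn_pmul2r // diff_f expn_gt0.
rewrite ltn_exp2l // => dimB_large.
by case: (anti_f A B fAB) => [[dimAB dimA_small] | [_ ->]] //; lia.
Qed.

Definition blockv m b (i : 'I_b) (y : Blk m) : Vsp m b :=
  [ffun j => if j == i then y else 0].

Fact blockv_is_semilinear m b i : semilinear (@blockv m b i).
Proof.
by split=> [k y | y z]; apply/ffunP => j; rewrite !ffunE; case: (j == i);
  rewrite ?scaler0 ?addr0.
Qed.

HB.instance Definition _ m b i :=
  GRing.isSemilinear.Build F2 (Blk m) (Vsp m b) _ (@blockv m b i)
    (@blockv_is_semilinear m b i).

Lemma sum_blockv m b (v : Vsp m b) : \sum_i blockv i (v i) = v.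
Proof.
apply/ffunP => j; rewrite sum_ffunE (bigD1 j) //= ffunE eqxx big1 ?addr0 //.
by move=> k k_neq_j; rewrite ffunE eq_sym (negbTE k_neq_j).
Qed.

Definition vsection m b (W : {vspace Vsp m b}) (i : 'I_b) : {vspace Blk m} :=
  (linfun (@blockv m b i) @^-1: W)%VS.

Lemma mem_vsection m b (W : {vspace Vsp m b}) i y :
  (y \in vsection W i) = (blockv i y \in W).
Proof. by rewrite -memv_preim lfunE. Qed.

Definition full_sections m b (W : {vspace Vsp m b}) : {set 'I_b} :=
  [set i | vsection W i == fullv].

Lemma parallel_inj m b (g : 'I_b -> {perm Blk m}) : injective (parallel g).
Proof.
move=> v w /ffunP eq_vw; apply/ffunP => j.
by move: (eq_vw j); rewrite !ffunE; apply: perm_inj.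
Qed.

Section ParallelZero.
Variables (m b : nat) (g : 'I_b -> {perm Blk m}).
Hypothesis g0 : forall i, g i 0 = 0.

Lemma parallel0 : parallel g 0 = 0.
Proof. by apply/ffunP => j; rewrite !ffunE g0. Qed.

Lemma parallel_blockv i y : parallel g (blockv i y) = blockv i (g i y).
Proof. by apply/ffunP => j; rewrite !ffunE; case: eqP => [-> | _]; rewrite ?g0. Qed.

Lemma parallel_addr_blockv i w t :
  parallel g (w + blockv i t) - parallel g (blockv i t) - parallel g w =
  blockv i (g i (w i + t) - g i t - g i (w i)).
Proof.
apply/ffunP => j; rewrite !ffunE; case: eqP => [-> // | _].
by rewrite addr0 g0 subr0 subrr.
Qed.

End ParallelZero.

Lemma mem_vcoset m b (W : {vspace Vsp m b}) v y : (y \in vcoset W v) = (y - v \in W).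
Proof.
apply/imsetP/idP => [[w] | Wy]; first by rewrite inE => Ww ->; rewrite addrK.
by exists (y - v); rewrite ?inE ?subrK.
Qed.

Lemma card_vcoset m b (W : {vspace Vsp m b}) v : #|vcoset W v| = #|W|.
Proof. by rewrite card_imset ?cardsE //; apply: addIr. Qed.

Lemma vcoset_id m b (W : {vspace Vsp m b}) v : v \in W -> vcoset W v = [set y in W].
Proof. by move=> Wv; apply/setP => y; rewrite mem_vcoset inE rpredBr. Qed.

Section ImageOfCoset.
Variables (m b : nat) (F : Vsp m b -> Vsp m b) (W' W : {vspace Vsp m b}) (x v : Vsp m b).
Hypothesis F_coset : F @: vcoset W' x = vcoset W v.

Lemma image_vcoset_subr w : w \in W' -> F (w + x) - F x \in W.
Proof.
move=> W'w; have image_in y : y - x \in W' -> F y - v \in W.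
  by move=> W'y; rewrite -mem_vcoset -F_coset imset_f // mem_vcoset.
have := memvB (image_in (w + x) _) (image_in x _).
by rewrite opprB addrA subrK addrK subrr mem0v; apply.
Qed.

Lemma card_image_vcoset : injective F -> #|W'| = #|W|.
Proof.
move=> F_inj.
by rewrite -(card_vcoset W' x) -(card_vcoset W v) -F_coset (card_imset _ F_inj).
Qed.

Lemma image_vspace : F 0 = 0 -> x \in W' -> F @: [set y in W'] = [set y in W].
Proof.
move=> F0 W'x; rewrite -(vcoset_id W'x) F_coset vcoset_id //.
rewrite -rpredN -sub0r -mem_vcoset -F_coset -F0 imset_f //.
by rewrite mem_vcoset sub0r rpredN.
Qed.

End ImageOfCoset.

Lemma Lpart0 m b : Lpart (0%VS : {vspace Vsp m b}) = singleton_part (Vsp m b).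
Proof.
apply: eq_imset => v; apply/setP => y.
by rewrite mem_vcoset memv0 subr_eq0 inE.
Qed.

Lemma Lpartf m b : Lpart (fullv : {vspace Vsp m b}) = full_part (Vsp m b).
Proof.
have coset_full v : vcoset fullv v = [set: Vsp m b].
  by apply/setP => y; rewrite mem_vcoset memvf inE.
apply/setP => X; rewrite in_set1; apply/imsetP/eqP => [[v _ ->] | ->].
  exact: coset_full.
by exists 0; rewrite ?inE ?coset_full.
Qed.

Lemma LApart_id m b (U W : {vspace Vsp m b}) vbar :
  \dim U = (\dim {:Vsp m b}).-1 -> vbar \notin U -> LApart U W W vbar = Lpart W.
Proof.
move=> dimU vbar_notin; apply/setP => X; apply/idP/imsetP.
  by rewrite inE => /orP [] /imsetP [v _ ->]; eexists.
case=> v _ ->; rewrite inE; have [Uv | U'v] := boolP (v \in U).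
  by apply/orP; left; apply/imsetP; exists v; rewrite ?inE.
apply/orP; right; apply/imsetP; exists (v - vbar).
  by rewrite inE opprv_F2 hyperplane_addv.
by rewrite addrC subrK.
Qed.

Lemma subv_card_eq m b (X Y : {vspace Vsp m b}) : (X <= Y)%VS -> #|X| = #|Y| -> X = Y.
Proof.
move=> sXY cardXY; apply/eqP; rewrite eqEdim sXY /=.
by move: cardXY; rewrite !card_vspace card_Fp // => /eqP; rewrite eqn_exp2l // => /eqP ->.
Qed.

Section ParallelImageOfLA.
Variables (m b r : nat) (g : 'I_b -> {perm Blk m}).
Variables (U W1 W2 W : {vspace Vsp m b}) (vbar : Vsp m b).
Hypothesis m_gt1 : (1 < m)%N.
Hypothesis r_small : (r < m.-1)%N.
Hypothesis g_diff : forall i, diff_uniform (g i) (2 ^ r).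
Hypothesis g_anti : forall i, strongly_anti_invariant r (g i).
Hypothesis dimU : \dim U = (\dim {:Vsp m b}).-1.
Hypothesis g_onto : maps_onto (parallel g) (LApart U W1 W2 vbar) (Lpart W).

Local Notation F := (parallel g).
Local Notation I := (full_sections W).

Let g0 i : g i 0 = 0. Proof. by case: (g_anti i). Qed.

Lemma image_LApart X : X \in LApart U W1 W2 vbar -> exists v, F @: X = vcoset W v.
Proof.
move=> LAX; have /imsetP [v _ ->] : F @: X \in Lpart W by rewrite -g_onto imset_f.
by exists v.
Qed.

Lemma image_W1_subr x w : x \in U -> w \in W1 -> F (w + x) - F x \in W.
Proof.
move=> Ux; have [v Fx] : exists v, F @: vcoset W1 x = vcoset W v.
  by apply: image_LApart; rewrite inE imset_f ?inE.
exact: (image_vcoset_subr (F := F) Fx).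
Qed.

Lemma image_W2_coset : exists v, F @: vcoset W2 vbar = vcoset W v.
Proof.
apply: image_LApart; rewrite inE; apply/orP; right.
by apply/imsetP; exists 0; rewrite ?inE ?mem0v ?addr0.
Qed.

Lemma image_W1 : F @: [set y in W1] = [set y in W].
Proof.
have [v Fx] : exists v, F @: vcoset W1 0 = vcoset W v.
  by apply: image_LApart; rewrite inE imset_f ?inE ?mem0v.
by apply: image_vspace Fx _ (mem0v _); apply: parallel0.
Qed.

Lemma image_vsection i :
  [set g i x | x in [set y in vsection W1 i]] = [set y in vsection W i].
Proof.
apply/setP => y; rewrite inE mem_vsection; apply/imsetP/idP.
  case=> x; rewrite inE mem_vsection => W1x ->; rewrite -parallel_blockv //.
  by rewrite -[_ \in W]inE -image_W1 imset_f ?inE.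
rewrite -[_ \in W]inE -image_W1 => /imsetP [w]; rewrite inE => W1w blk_y.
exists ((g i)^-1 y)%g; last by rewrite permKV.
rewrite inE mem_vsection (_ : blockv i _ = w) //.
by apply: (@parallel_inj _ _ g); rewrite parallel_blockv // permKV.
Qed.

Let T i := [set t | blockv i t \in U].

Let T_large i : (2 ^ m.-1 <= #|T i|)%N.
Proof. exact: card_preim_hyperplane dimU (ltnW m_gt1). Qed.

Lemma vsection_full i : vsection W i != 0%VS -> vsection W i = fullv.
Proof.
apply: diff_image_full (g_diff i) (g_anti i) (T_large i) (image_vsection i) _.
move=> t a; rewrite inE !mem_vsection => Ut W1a.
have := image_W1_subr Ut W1a.
rewrite -(raddfD (blockv i)) !parallel_blockv // -(raddfB (blockv i)).
by rewrite opprv_F2 (addrC a t).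
Qed.

Lemma W1_vsection_neq0 i w : w \in W1 -> w i != 0 -> vsection W i != 0%VS.
Proof.
move=> W1w wi_neq0; apply/negP => /eqP W_i0.
have level_T : T i \subset [set t | g i (t + w i) + g i t == g i (w i)].
  apply/subsetP => t; rewrite !inE => Ut.
  have W_Fw : F w \in W by rewrite -[_ \in W]inE -image_W1 imset_f ?inE.
  have := memvB (image_W1_subr Ut W1w) W_Fw.
  rewrite parallel_addr_blockv // -mem_vsection W_i0 memv0 !opprv_F2.
  by rewrite addr_eq0 opprv_F2 (addrC (w i)).
have := leq_card_diff_level (g i) (g i (w i)) wi_neq0.
move/(leq_trans (subset_leq_card level_T))/(leq_trans (T_large i)).
by rewrite (g_diff i) leq_exp2l // leqNgt r_small.
Qed.

Lemma W1_vanish i w : i \notin I -> w \in W1 -> w i = 0.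
Proof.
move=> I'i W1w; apply/eqP; apply: contraNT I'i => wi_neq0.
by rewrite inE vsection_full ?eqxx // (W1_vsection_neq0 W1w).
Qed.

Lemma memW v : v \in W <-> forall i, i \notin I -> v i = 0.
Proof.
split=> [Wv i I'i | vanish].
  move: Wv; rewrite -[_ \in W]inE -image_W1 => /imsetP [w]; rewrite inE => W1w ->.
  by rewrite ffunE W1_vanish // g0.
rewrite -[v]sum_blockv; apply: rpred_sum => i _; have [Ii | I'i] := boolP (i \in I).
  by move: Ii; rewrite inE -mem_vsection => /eqP ->; rewrite memvf.
by rewrite vanish // raddf0 mem0v.
Qed.

Lemma W2_vanish i w : i \notin I -> w \in W2 -> w i = 0.
Proof.
move=> I'i W2w; have [v Fcoset] := image_W2_coset.
have := (memW _).1 (image_vcoset_subr (F := F) Fcoset W2w) i I'i.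
rewrite !ffunE => /eqP; rewrite subr_eq0 => /eqP /perm_inj.
by rewrite -{2}[vbar i]add0r => /addIr.
Qed.

Lemma card_W1 : #|W1| = #|W|.
Proof.
have := congr1 (fun X : {set Vsp m b} => #|X|) image_W1.
by rewrite card_imset ?cardsE //; apply: parallel_inj.
Qed.

Lemma card_W2 : #|W2| = #|W|.
Proof.
have [v Fcoset] := image_W2_coset.
exact: card_image_vcoset Fcoset (@parallel_inj _ _ g).
Qed.

Lemma W1_eq : W1 = W.
Proof.
apply: subv_card_eq card_W1; apply/subvP => w W1w.
by apply/memW => i I'i; apply: W1_vanish.
Qed.

Lemma W2_eq : W2 = W.
Proof.
apply: subv_card_eq card_W2; apply/subvP => w W2w.
by apply/memW => i I'i; apply: W2_vanish.
Qed.

Lemma wall_W : Lpart W != singleton_part (Vsp m b) -> Lpart W != full_part (Vsp m b) ->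
  wall W.
Proof.
move=> W_nonsingleton W_nonfull; exists I; split; last exact: memW.
  apply: contra W_nonsingleton => /eqP I0; apply/eqP; rewrite -Lpart0; congr Lpart.
  apply/vspaceP => v; rewrite memv0; apply/idP/eqP => [/memW vanish | ->]; last exact: mem0v.
  by apply/ffunP => i; rewrite vanish ?ffunE // I0 inE.
apply: contra W_nonfull => /eqP IT; apply/eqP; rewrite -Lpartf; congr Lpart.
by apply/vspaceP => v; rewrite memvf; apply/memW => i; rewrite IT inE.
Qed.

End ParallelImageOfLA.

Theorem lemma3p10 (m b r : nat) (g : 'I_b -> {perm Blk m})
    (U W1 W2 W : {vspace Vsp m b}) (vbar : Vsp m b) :
  (1 < m)%N -> (1 < b)%N ->
  (0 < r)%N -> (r < m.-1)%N ->
  (forall i, diff_uniform (g i) (2 ^ r)) ->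
  (forall i, strongly_anti_invariant r (g i)) ->
  \dim U = (m * b).-1 ->
  (W1 <= U)%VS -> (W2 <= U)%VS ->
  vbar \notin U ->
  Lpart W != singleton_part (Vsp m b) ->
  Lpart W != full_part (Vsp m b) ->
  maps_onto (parallel g) (LApart U W1 W2 vbar) (Lpart W) ->
  [/\ wall W1, wall W2, wall W, W1 = W2 & W2 = W] /\
  LApart U W1 W2 vbar = Lpart W1.
Proof.
move=> m_gt1 _ _ r_small g_diff g_anti dimU _ _ vbar_notin W_nonsingleton W_nonfull g_onto.
rewrite -(dim_Vsp m b) in dimU.
have W1_eqW := W1_eq m_gt1 r_small g_diff g_anti dimU g_onto.
have W2_eqW := W2_eq m_gt1 r_small g_diff g_anti dimU g_onto.
have wallW := wall_W m_gt1 r_small g_diff g_anti dimU g_onto W_nonsingleton W_nonfull.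
rewrite W1_eqW W2_eqW; split=> //; exact: LApart_id.
Qed.
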